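(* Let $k\ge1$, let $A_k$ be the matrix defined below, and let $\mathbf{b}=(\mathbf{w}_1,\mathbf{w}_2,c)^{\mathsf T}\in\mathbb{Z}^{2k+1}$ ($\mathbf{w}_1,\mathbf{w}_2\in\mathbb{Z}^k$, $c\in\mathbb{Z}$) with $\mathcal{F}_{A_k}(\mathbf{b})\ne\emptyset$. For every integer $s\in[l(\mathbf{b}),u(\mathbf{b})]$, the minimal degree and the vertex-connectivity of the induced subgraph of $G_{A_k,\mathbf{b},\mathcal{G}(A_k)}$ on $C_s(\mathbf{b})$ both equal $$|\mathrm{supp}(\mathbf{w}_1+s\mathbf{1}_k)|+|\mathrm{supp}(\mathbf{w}_2+(c-s)\mathbf{1}_k)|.$$
   Context: $I_k$ is the $k\times k$ identity, $\mathbf{1}_k$ the all-ones vector in $\mathbb{Z}^k$. Define $$A_k=\begin{pmatrix} I_k & I_k & 0 & 0 & -\mathbf{1}_k & \mathbf{0}\\ 0&0&I_k&I_k&\mathbf{0}&-\mathbf{1}_k\\ 0&0&0&0&1&1\end{pmatrix}\in\mathbb{Z}^{(2k+1)\times(4k+2)}$$ (zero blocks of appropriate sizes; last two columns are single columns). Fiber: $\mathcal{F}_A(\mathbf{b})=\{\mathbf{u}\in\mathbb{Z}^n_{\ge0}:A\mathbf{u}=\mathbf{b}\}$; for $\mathcal{M}\subset\mathbb{Z}^n$, $G_{A,\mathbf{b},\mathcal{M}}$ is the graph on $\mathcal{F}_A(\mathbf{b})$ with distinct $\mathbf{u},\mathbf{v}$ adjacent iff $\mathbf{u}-\mathbf{v}\in\pm\mathcal{M}$.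 The Graver basis $\mathcal{G}(A)$ is the set of $\sqsubseteq$-minimal elements of $(\ker A\cap\mathbb{Z}^n)\setminus\{\mathbf{0}\}$, where $\mathbf{u}\sqsubseteq\mathbf{v}$ iff $u_iv_i\ge0$ and $|u_i|\le|v_i|$ for all $i$. $\mathrm{supp}(\mathbf{w})$ is the set of indices of nonzero entries. $\mathbf{w}^-$ has entries $\max(-w_i,0)$; $l(\mathbf{b}):=\|\mathbf{w}_1^-\|_\infty$, $u(\mathbf{b}):=c-\|\mathbf{w}_2^-\|_\infty$; $C_s(\mathbf{b}):=\{\mathbf{u}\in\mathcal{F}_{A_k}(\mathbf{b}):u_{4k+1}=s\}$. A graph $G=(V,E)$ is $\ell$-vertex-connected if $|V|>\ell$ and deleting any fewer than $\ell$ vertices leaves it connected; the vertex-connectivity is the largest such $\ell$. *)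

From HB Require Import structures.
From mathcomp Require Import all_boot all_order all_algebra.
From Stdlib Require Import Relations.
Set Implicit Arguments. Unset Strict Implicit. Unset Printing Implicit Defensive.
Import Order.TTheory GRing.Theory Num.Theory.
Local Open Scope ring_scope.

Definition ncols (k : nat) : nat := (k + k + k + k + 1 + 1)%N.
Definition nrows (k : nat) : nat := (k + k + 1)%N.

Definition A_mat (k : nat) : 'M[int]_(k + k + 1, k + k + k + k + 1 + 1) :=
  col_mx
    (col_mx
       (row_mx (row_mx (row_mx (row_mx (row_mx (1%:M : 'M[int]_k) 1%:M) 0) 0)
                 (- const_mx 1)) 0)
       (row_mx (row_mx (row_mx (row_mx (row_mx (0 : 'M[int]_k) 0) 1%:M) 1%:M) 0)
                 (- const_mx 1)))
    (row_mx (row_mx (row_mx (row_mx (row_mx (0 : 'M[int]_(1, k)) 0) 0) 0)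
              (const_mx 1)) (const_mx 1)).

Definition b_vec (k : nat) (w1 w2 : 'cV[int]_k) (c : int) : 'cV[int]_(k + k + 1) :=
  col_mx (col_mx w1 w2) (const_mx c).

Definition in_fiber (m n : nat) (A : 'M[int]_(m, n)) (b : 'cV[int]_m) (u : 'cV[int]_n)
  : Prop := (forall i, 0 <= u i 0) /\ A *m u = b.

Definition conf_le (n : nat) (u v : 'cV[int]_n) : Prop :=
  forall i, 0 <= u i 0 * v i 0 /\ `|u i 0| <= `|v i 0|.

Definition in_graver (m n : nat) (A : 'M[int]_(m, n)) (g : 'cV[int]_n) : Prop :=
  A *m g = 0 /\ g <> 0 /\
  (forall h : 'cV[int]_n, A *m h = 0 -> h <> 0 -> conf_le h g -> h = g).

Definition fiber_adj (n : nat) (M : 'cV[int]_n -> Prop) (u v : 'cV[int]_n) : Prop :=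
  u <> v /\ (M (u - v) \/ M (- (u - v))).

Definition has_degree (T : eqType) (V : T -> Prop) (adj : T -> T -> Prop) (v : T) (d : nat)
  : Prop :=
  exists s : seq T, uniq s /\ size s = d /\
    (forall w, w \in s <-> (V w /\ adj v w)).

Definition min_degree_eq (T : eqType) (V : T -> Prop) (adj : T -> T -> Prop) (d : nat)
  : Prop :=
  (exists v, V v /\ has_degree V adj v d) /\
  (forall v, V v -> exists d', has_degree V adj v d' /\ (d <= d')%N).

Definition connected_on (T : Type) (W : T -> Prop) (adj : T -> T -> Prop) : Prop :=
  forall u v, W u -> W v ->
    clos_refl_trans T (fun a b => W a /\ W b /\ adj a b) u v.

Definition vconnected (T : eqType) (V : T -> Prop) (adj : T -> T -> Prop) (l : nat)
  : Prop :=
  (exists s : seq T, uniq s /\ (l < size s)%N /\ (forall x, x \in s -> V x)) /\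
  (forall S : seq T, (size S < l)%N ->
     connected_on (fun x => V x /\ x \notin S) adj).

Definition vconnectivity_eq (T : eqType) (V : T -> Prop) (adj : T -> T -> Prop) (l : nat)
  : Prop :=
  vconnected V adj l /\ (forall m, vconnected V adj m -> (m <= l)%N).

Definition neg_inf_norm (k : nat) (w : 'cV[int]_k) : int :=
  \big[Num.max/0]_(i < k) Num.max (- w i 0) 0.

Definition l_b (k : nat) (w1 : 'cV[int]_k) : int := neg_inf_norm w1.
Definition u_b (k : nat) (w2 : 'cV[int]_k) (c : int) : int := c - neg_inf_norm w2.

(* The coordinate u_{4k+1} (1-based), i.e. the first of the two last columns. *)
Definition coord_p (k : nat) (u : 'cV[int]_(k + k + k + k + 1 + 1)) : int :=
  (dsubmx (usubmx u)) 0 0.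

Definition C_s (k : nat) (w1 w2 : 'cV[int]_k) (c s : int)
  (u : 'cV[int]_(k + k + k + k + 1 + 1)) : Prop :=
  in_fiber (A_mat k) (b_vec w1 w2 c) u /\ coord_p u = s.

Definition supp_size (k : nat) (w : 'cV[int]_k) (t : int) : nat :=
  #|[set i : 'I_k | w i 0 + t != 0]|.

From HB Require Import structures.
From mathcomp Require Import all_boot all_order all_algebra zify.
From Stdlib Require Import Relations.
Set Implicit Arguments. Unset Strict Implicit. Unset Printing Implicit Defensive.

(* Writing u = (x, y, z, t, p, q) along the column blocks of A_k, a
   point of C_s(b) is determined by (x, z): the equations force p = s, q = c - s,
   y = w1 + s - x and t = w2 + c - s - z, so C_s(b) is the lattice box
   prod_i [0, w1_i + s] x prod_i [0, w2_i + c - s].  Differences of its points lie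
   in the copy { (x, -x, z, -z, 0, 0) } of Z^(2k) inside ker A_k, where the
   conformal order is the coordinatewise one; the Graver elements there are the
   +-e_i, so the induced graph is the grid graph of the box.  In a grid with d
   nondegenerate sides the origin has degree d and every vertex at least d.
   Removing fewer than d vertices leaves the grid connected, by induction on the
   dimension: a layer that loses fewer than d - 1 vertices is connected by
   induction, a layer containing every removed vertex is bypassed through an
   adjacent untouched layer, and two consecutive layers are joined through one
   of the d + 1 points of the closed neighbourhood of the origin that is free in
   both.  Removing the d neighbours of the origin isolates it, so the
   connectivity is exactly d. *)

(** * Connectivity and graph isomorphisms *)

Local Notation crt := (clos_refl_trans _).

Lemma crt_map (T1 T2 : Type) (R1 : relation T1) (R2 : relation T2) (f : T1 -> T2) :
  (forall a b, R1 a b -> R2 (f a) (f b)) -> forall x y, crt R1 x y -> crt R2 (f x) (f y).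
Proof.
move=> hR x y; elim=> [a b /hR|a|a b c _ hab _ hbc]; first exact: rt_step.
  exact: rt_refl.
exact: rt_trans hab hbc.
Qed.

Lemma crt_sym (T : Type) (R : relation T) : (forall a b, R a b -> R b a) ->
  forall x y, crt R x y -> crt R y x.
Proof.
move=> hR x y; elim=> [a b /hR|a|a b c _ hba _ hcb]; first exact: rt_step.
  exact: rt_refl.
exact: rt_trans hcb hba.
Qed.

Lemma exists_notin (T : eqType) (s t : seq T) : uniq s -> size t < size s ->
  exists2 x, x \in s & x \notin t.
Proof.
move=> us lt_ts; case: (boolP (has (fun x => x \notin t) s)) => [/hasP[x] | /hasPn hs].
  by exists x.
suff: size s <= size t by rewrite leqNgt lt_ts.
by apply: uniq_leq_size => // x /hs; rewrite negbK.
Qed.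

Lemma vconnected_le_degree (T : eqType) (V : T -> Prop) (adj : T -> T -> Prop) v d m :
  V v -> ~ adj v v -> has_degree V adj v d -> vconnected V adj m -> m <= d.
Proof.
move=> Vv adj_vv [s [_ [<- hs]]] [[t [ut [lt_mt Vt]]] hconn].
rewrite leqNgt; apply/negP => lt_sm.
have [|w wt wN] := exists_notin ut (t := v :: s); first exact: leq_ltn_trans lt_sm lt_mt.
have vS : v \notin s by apply/negP => /hs[].
have wS : w \notin s by apply: contra wN => ws; rewrite in_cons ws orbT.
have path := clos_rt_rt1n _ _ _ _ (hconn s lt_sm v w (conj Vv vS) (conj (Vt w wt) wS)).
destruct path as [|b w' [_ [[Vb bS] vb]] _]; first by rewrite in_cons eqxx in wN.
by move: bS; rewrite (proj2 (hs b) (conj Vb vb)).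
Qed.

Definition graph_iso (T1 T2 : Type) (V1 : T1 -> Prop) (adj1 : T1 -> T1 -> Prop)
    (V2 : T2 -> Prop) (adj2 : T2 -> T2 -> Prop) (f : T1 -> T2) (g : T2 -> T1) : Prop :=
  [/\ forall x, V1 x -> V2 (f x), forall y, V2 y -> V1 (g y),
      forall x, V1 x -> g (f x) = x, forall y, V2 y -> f (g y) = y &
      forall x y, V1 x -> V1 y -> adj2 (f x) (f y) <-> adj1 x y].

Lemma graph_iso_sym T1 T2 V1 adj1 V2 adj2 (f : T1 -> T2) (g : T2 -> T1) :
  graph_iso V1 adj1 V2 adj2 f g -> graph_iso V2 adj2 V1 adj1 g f.
Proof.
case=> fV gV fK gK f_adj; split=> // y y' Vy Vy'.
by have := f_adj _ _ (gV _ Vy) (gV _ Vy'); rewrite !gK //; exact: iff_sym.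
Qed.

Section GraphIso.
Variables (T1 T2 : eqType) (V1 : T1 -> Prop) (adj1 : T1 -> T1 -> Prop).
Variables (V2 : T2 -> Prop) (adj2 : T2 -> T2 -> Prop) (f : T1 -> T2) (g : T2 -> T1).
Hypothesis fg_iso : graph_iso V1 adj1 V2 adj2 f g.

Lemma map_iso_uniq s : (forall y, y \in s -> V2 y) -> uniq s -> uniq (map g s).
Proof.
case: fg_iso => _ _ _ gK _ Vs; rewrite map_inj_in_uniq // => y y' /Vs Vy /Vs Vy' e.
by rewrite -(gK _ Vy) -(gK _ Vy') e.
Qed.

Lemma iso_has_degree x d : V1 x -> has_degree V2 adj2 (f x) d -> has_degree V1 adj1 x d.
Proof.
have [fV gV fK gK f_adj] := fg_iso; have [_ _ _ _ g_adj] := graph_iso_sym fg_iso.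
move=> Vx [s [us [<- hs]]]; exists (map g s); split; last split.
- by apply: map_iso_uniq => // y /hs[].
- by rewrite size_map.
move=> w; split.
  case/mapP => y /hs[Vy fx_y] ->; split; first exact: gV.
  by rewrite -(fK _ Vx); apply/(g_adj _ _ (fV _ Vx) Vy).
case=> Vw xw; rewrite -(fK _ Vw); apply: map_f; apply/hs.
by split; [exact: fV | exact/f_adj].
Qed.

Lemma iso_min_degree_eq d : min_degree_eq V2 adj2 d -> min_degree_eq V1 adj1 d.
Proof.
have [fV gV _ gK _] := fg_iso.
case=> [[v [Vv hv]] hmin]; split.
  by exists (g v); split; [exact: gV | apply: iso_has_degree; [exact: gV | rewrite gK]].
move=> x Vx; have [d' [hd' le_dd']] := hmin _ (fV _ Vx).
by exists d'; split => //; exact: iso_has_degree.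
Qed.

Lemma iso_vconnected l : vconnected V2 adj2 l -> vconnected V1 adj1 l.
Proof.
have [fV gV fK gK _] := fg_iso; have [_ _ _ _ g_adj] := graph_iso_sym fg_iso.
case=> [[s [us [lt_ls Vs]]] hconn]; split.
  exists (map g s); split; first exact: map_iso_uniq.
  by rewrite size_map; split => // x /mapP[y /Vs Vy ->]; exact: gV.
move=> S lt_Sl u v [Vu uS] [Vv vS].
pose S2 := [seq y <- map f S | g y \in S].
have lt_S2l : size S2 < l.
  by apply: leq_ltn_trans lt_Sl; rewrite size_filter -(size_map f S) count_size.
have notin_S2 x : V1 x -> x \notin S -> f x \notin S2.
  by move=> Vx; apply: contra; rewrite mem_filter fK // => /andP[].
have notin_S y : V2 y -> y \notin S2 -> g y \notin S.
  move=> Vy; apply: contra => gyS; rewrite mem_filter gyS /=.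
  by rewrite -(gK _ Vy); apply: map_f.
rewrite -(fK _ Vu) -(fK _ Vv); apply: crt_map (hconn _ lt_S2l _ _ _ _); last first.
- by split; [exact: fV | exact: notin_S2].
- by split; [exact: fV | exact: notin_S2].
move=> a b [[Va aS2] [[Vb bS2] ab]].
split; first by split; [exact: gV | exact: notin_S].
split; first by split; [exact: gV | exact: notin_S].
exact/g_adj.
Qed.

End GraphIso.

Lemma iso_vconnectivity_eq (T1 T2 : eqType) (V1 : T1 -> Prop) (adj1 : T1 -> T1 -> Prop)
    (V2 : T2 -> Prop) (adj2 : T2 -> T2 -> Prop) (f : T1 -> T2) (g : T2 -> T1) l :
  graph_iso V1 adj1 V2 adj2 f g -> vconnectivity_eq V2 adj2 l -> vconnectivity_eq V1 adj1 l.
Proof.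
move=> fg_iso [hl hmax]; split; first exact: (iso_vconnected fg_iso hl).
by move=> m /(iso_vconnected (graph_iso_sym fg_iso)); exact: hmax.
Qed.

(** * Grid graphs *)

Fixpoint in_grid (Ls x : seq nat) : bool :=
  match Ls, x with
  | [::], [::] => true
  | L :: Ls', a :: x' => (a <= L) && in_grid Ls' x'
  | _, _ => false
  end.

Fixpoint grid_adj (x y : seq nat) : bool :=
  match x, y with
  | a :: x', b :: y' =>
      ((a == b) && grid_adj x' y') || (((a == b.+1) || (b == a.+1)) && (x' == y'))
  | _, _ => false
  end.

Fixpoint grid_nbrs (Ls x : seq nat) : seq (seq nat) :=
  match Ls, x with
  | L :: Ls', a :: x' =>
      (if 0 < a then [:: a.-1 :: x'] else [::]) ++
      (if a < L then [:: a.+1 :: x'] else [::]) ++ map (cons a) (grid_nbrs Ls' x')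
  | _, _ => [::]
  end.

Definition grid_origin (Ls : seq nat) : seq nat := nseq (size Ls) 0.

Definition nonzero_sides (Ls : seq nat) : nat := count (fun L => 0 < L) Ls.

Lemma grid_adjC x y : grid_adj x y = grid_adj y x.
Proof.
elim: x y => [|a x IH] [|b y] //=.
by rewrite IH (eq_sym b a) (eq_sym y x) (orbC (b == a.+1)).
Qed.

Lemma grid_adj_irr x : grid_adj x x = false.
Proof. by elim: x => //= a x ->; rewrite andbF /=; apply/negbTE; lia. Qed.

Lemma in_grid_origin Ls : in_grid Ls (grid_origin Ls).
Proof. by elim: Ls => //= L Ls IH; rewrite IH. Qed.

Lemma in_gridP Ls x :
  in_grid Ls x <-> size x = size Ls /\ forall i, nth 0 x i <= nth 0 Ls i.
Proof.
elim: Ls x => [|L Ls IH] [|a x] /=; try by split=> // -[].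
rewrite -(rwP andP) IH; split=> [[ha [-> hx]] | [[sx] hx]]; first by split=> // -[].
by split; [exact: (hx 0) | split=> // i; exact: (hx i.+1)].
Qed.

Lemma grid_adjP x y : size x = size y -> grid_adj x y <->
  exists i, (nth 0 x i = (nth 0 y i).+1 \/ nth 0 y i = (nth 0 x i).+1) /\
            forall j, j != i -> nth 0 x j = nth 0 y j.
Proof.
elim: x y => [|a x IH] [|b y] //=; first by split=> // -[i [[] h _]]; rewrite !nth_nil in h.
move=> [sxy]; split.
  case/orP=> [/andP[/eqP <- /(IH _ sxy)[i [hi hx]]] | /andP[hab /eqP <-]].
    by exists i.+1; split=> // -[|j] //= /hx.
  by exists 0; split=> [|[|j]] //; case/orP: hab => /eqP ->; [left | right].
case=> -[|i] /= [hi hx].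
  apply/orP; right; rewrite (@eq_from_nth _ 0 x y) ?eqxx ?andbT //.
    by case: hi => ->; rewrite eqxx ?orbT.
  by move=> j _; exact: (hx j.+1).
have /= -> := hx 0 isT; apply/orP; left; rewrite eqxx /=; apply/(IH _ sxy).
by exists i; split=> // j ji; apply: (hx j.+1).
Qed.

Lemma mem_map_cons (a b : nat) (y : seq nat) (s : seq (seq nat)) :
  (b :: y \in map (cons a) s) = (b == a) && (y \in s).
Proof.
apply/mapP/andP => [[z zs [-> ->]]|[/eqP -> ys]]; last by exists y.
by rewrite eqxx.
Qed.

Lemma mem_grid_nbrs Ls x y :
  in_grid Ls x -> (y \in grid_nbrs Ls x) = in_grid Ls y && grid_adj x y.
Proof.
elim: Ls x y => [|L Ls IH] [|a x] [|b y] //=.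
- move=> _; rewrite !mem_cat.
  have -> : ([::] \in [seq a :: z | z <- grid_nbrs Ls x]) = false by apply/mapP => -[].
  by rewrite orbF; case: ifP; case: ifP.
- move=> /andP[ha hx]; rewrite !mem_cat mem_map_cons IH //.
  case: (0 < a)%N / ltP => h1; case: (a < L)%N / ltP => h2;
  rewrite ?in_cons ?in_nil ?orbF ?eqseq_cons /=;
  have [->|nexy] := eqVneq y x; rewrite ?grid_adj_irr ?hx ?eqxx ?andbF ?andbT ?orbF /=;
  lia.
Qed.

Lemma uniq_grid_nbrs Ls x : uniq (grid_nbrs Ls x).
Proof.
elim: Ls x => [|L Ls IH] [|a x] //=.
have hu := map_inj_uniq (fun u v (e : a :: u = a :: v) => congr1 behead e).
case: (0 < a)%N / ltP => h1; case: (a < L)%N / ltP => h2 /=;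
rewrite ?in_cons ?mem_map_cons ?hu ?IH ?eqseq_cons ?andbT /=; apply/negP; lia.
Qed.

Lemma nonzero_sides_le_size_grid_nbrs Ls x :
  in_grid Ls x -> nonzero_sides Ls <= size (grid_nbrs Ls x).
Proof.
rewrite /nonzero_sides; elim: Ls x => [|L Ls IH] [|a x] //= /andP[ha /IH hx].
rewrite !size_cat size_map.
case: (0 < a)%N / ltP => h1; case: (a < L)%N / ltP => h2 /=; lia.
Qed.

Lemma size_grid_nbrs_origin Ls : size (grid_nbrs Ls (grid_origin Ls)) = nonzero_sides Ls.
Proof.
rewrite /nonzero_sides; elim: Ls => [|L Ls IH] //=.
by rewrite !size_cat size_map IH; case: L.
Qed.

Lemma grid_origin_notin_nbrs Ls : grid_origin Ls \notin grid_nbrs Ls (grid_origin Ls).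
Proof. by rewrite mem_grid_nbrs ?in_grid_origin // grid_adj_irr andbF. Qed.

Definition grid_ball (Ls : seq nat) : seq (seq nat) :=
  grid_origin Ls :: grid_nbrs Ls (grid_origin Ls).

Lemma uniq_grid_ball Ls : uniq (grid_ball Ls).
Proof. by rewrite /= grid_origin_notin_nbrs uniq_grid_nbrs. Qed.

Lemma size_grid_ball Ls : size (grid_ball Ls) = (nonzero_sides Ls).+1.
Proof. by rewrite /= size_grid_nbrs_origin. Qed.

Lemma in_grid_ball Ls z : z \in grid_ball Ls -> in_grid Ls z.
Proof.
rewrite in_cons => /orP[/eqP ->|]; first exact: in_grid_origin.
by rewrite mem_grid_nbrs ?in_grid_origin // => /andP[].
Qed.

Definition layer (j : nat) (S : seq (seq nat)) : seq (seq nat) :=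
  [seq behead z | z <- S & ohead z == Some j].

Lemma mem_layer j S z : (z \in layer j S) = (j :: z \in S).
Proof.
apply/mapP/idP => [[[|a y] /=]|zS]; last by exists (j :: z); rewrite // mem_filter eqxx.
  by rewrite mem_filter.
by rewrite mem_filter => /andP[/eqP[->] yS] ->.
Qed.

Lemma size_layer j S : size (layer j S) <= size S.
Proof. by rewrite size_map size_filter count_size. Qed.

Lemma size_layers j j' S : j != j' -> size (layer j S) + size (layer j' S) <= size S.
Proof.
move=> ne; rewrite !size_map !size_filter -count_predUI.
have -> : count (predI (fun z => ohead z == Some j) (fun z => ohead z == Some j')) S = 0.
  apply/eqP; rewrite -leqn0 leqNgt -has_count; apply/hasP => -[z _ /andP[/eqP -> /eqP[]]].
  exact/eqP.
by rewrite addn0 count_size.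
Qed.

Definition grid_minus (Ls : seq nat) (S : seq (seq nat)) (a b : seq nat) : Prop :=
  [&& in_grid Ls a, a \notin S, in_grid Ls b, b \notin S & grid_adj a b].

Lemma grid_minus_sym Ls S a b : grid_minus Ls S a b -> grid_minus Ls S b a.
Proof. by rewrite /grid_minus grid_adjC => /and5P[-> -> -> -> ->]. Qed.

Lemma grid_minus_cons L Ls S S' j x y : j <= L -> (forall z, j :: z \in S -> z \in S') ->
  crt (grid_minus Ls S') x y -> crt (grid_minus (L :: Ls) S) (j :: x) (j :: y).
Proof.
move=> hj hS; apply: crt_map => a b /and5P[ia na ib nb ab].
apply/and5P; split => /=; rewrite ?hj ?ia ?ib ?eqxx ?ab //.
  by apply/negP => /hS; rewrite (negbTE na).
by apply/negP => /hS; rewrite (negbTE nb).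
Qed.

Lemma grid_minus_line L Ls S y n a : in_grid Ls y ->
  (forall j, j <= L -> j :: y \notin S) -> a + n <= L ->
  crt (grid_minus (L :: Ls) S) (a :: y) ((a + n) :: y).
Proof.
move=> iy hS; elim: n a => [|n IH] a h; first by rewrite addn0; apply: rt_refl.
apply: rt_trans (IH a _) _; first lia.
apply: rt_step; apply/and5P; split => /=; rewrite ?iy ?hS ?andbT //; try lia.
by rewrite eqxx /=; apply/orP; right; lia.
Qed.

Lemma grid_connected Ls x y : in_grid Ls x -> in_grid Ls y -> crt (grid_minus Ls [::]) x y.
Proof.
elim: Ls x y => [|L Ls IH] [|a x] [|b y] //=; first by move=> *; apply: rt_refl.
move=> /andP[ha hx] /andP[hb hy].
apply: rt_trans (grid_minus_cons (S' := [::]) ha _ (IH _ _ hx hy)) _ => //.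
have hl n c := @grid_minus_line L Ls [::] y n c hy (fun _ _ => isT).
case: (leqP a b) => hab; first by have := hl (b - a) a; rewrite subnKC //; apply.
apply: (crt_sym (@grid_minus_sym _ _)).
by have := hl (a - b) b; rewrite subnKC ?(ltnW hab) //; apply.
Qed.

Section GridMinusConnected.
Variables (L : nat) (Ls : seq nat) (S : seq (seq nat)).
Hypothesis IH : forall S' x y, size S' < nonzero_sides Ls -> in_grid Ls x -> in_grid Ls y ->
  x \notin S' -> y \notin S' -> crt (grid_minus Ls S') x y.
Hypothesis hS : size S <= nonzero_sides Ls.

Local Notation G := (grid_minus (L.+1 :: Ls) S).

(* If one layer holds all of [S], the neighbouring layer is free of [S] and
   provides the detour. *)
Lemma layer_connected j z1 z2 : j <= L.+1 -> in_grid Ls z1 -> in_grid Ls z2 ->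
  j :: z1 \notin S -> j :: z2 \notin S -> crt G (j :: z1) (j :: z2).
Proof.
move=> hj h1 h2 n1 n2.
case: (ltnP (size (layer j S)) (nonzero_sides Ls)) => hl.
  apply: (grid_minus_cons (S' := layer j S)) => //; first by move=> z; rewrite mem_layer.
  by apply: IH; rewrite // mem_layer.
pose j' := if j < L.+1 then j.+1 else j.-1.
have hj' : j' <= L.+1 by rewrite /j'; case: ltnP; lia.
have nej : j != j' by rewrite /j'; case: ltnP; lia.
have layer_j'_nil : layer j' S = [::].
  have := size_layers S nej; have := size_layer j S.
  by case: (layer j' S) => //= *; lia.
have nS z : j' :: z \notin S by rewrite -mem_layer layer_j'_nil.
have cross z : in_grid Ls z -> j :: z \notin S -> G (j :: z) (j' :: z).
  move=> iz nz; apply/and5P; split => //=; rewrite ?hj ?hj' ?iz ?nS ?eqxx //.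
  by apply/orP; right; rewrite andbT /j'; case: ltnP; lia.
apply: rt_trans (rt_step _ _ _ _ (cross _ h1 n1)) _.
apply: rt_trans _ (rt_step _ _ _ _ (grid_minus_sym (cross _ h2 n2))).
apply: (grid_minus_cons (S' := [::])) => //; last exact: grid_connected.
by move=> z; rewrite (negbTE (nS z)).
Qed.

(* The [nonzero_sides Ls + 1] points of [grid_ball Ls] cannot all be blocked
   in layer [j] or in layer [j + 1]. *)
Lemma layer_bridge j : j < L.+1 ->
  exists2 z, in_grid Ls z & (j :: z \notin S) && (j.+1 :: z \notin S).
Proof.
move=> hj.
have [|z zs zt] := exists_notin (uniq_grid_ball Ls) (t := layer j S ++ layer j.+1 S).
  rewrite size_cat size_grid_ball ltnS.
  by apply: leq_trans hS; apply: size_layers; rewrite ltn_eqF.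
exists z; first exact: in_grid_ball.
by move: zt; rewrite mem_cat !mem_layer negb_or.
Qed.

Lemma layers_connected n j z1 z2 : j + n <= L.+1 -> in_grid Ls z1 -> in_grid Ls z2 ->
  j :: z1 \notin S -> (j + n) :: z2 \notin S -> crt G (j :: z1) ((j + n) :: z2).
Proof.
elim: n j z1 => [|n IHn] j z1 hjn h1 h2 n1 n2.
  by rewrite addn0 in hjn n2 *; apply: layer_connected.
have hj : j < L.+1 by lia.
have [z iz /andP[nz nz']] := layer_bridge hj.
apply: rt_trans (layer_connected (ltnW hj) h1 iz n1 nz) _.
apply: (rt_trans _ _ _ (j.+1 :: z)).
  apply: rt_step; apply/and5P; split => //=; rewrite ?iz ?hj ?(ltnW hj) //.
  by rewrite eqxx /=; apply/orP; right; rewrite eqxx orbT.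
by rewrite addnS -addSn in hjn n2 *; exact: IHn.
Qed.

End GridMinusConnected.

Theorem grid_minus_connected Ls S x y : size S < nonzero_sides Ls ->
  in_grid Ls x -> in_grid Ls y -> x \notin S -> y \notin S -> crt (grid_minus Ls S) x y.
Proof.
elim: Ls S x y => [|L Ls IH] S [|a x] [|b y] //=; rewrite /nonzero_sides /= -/(nonzero_sides Ls).
move=> hS /andP[ha hx] /andP[hb hy] nx ny.
case: L ha hb hS => [|L] ha hb /= hS.
  have [a0 b0] : a = 0 /\ b = 0 by lia.
  subst a b; rewrite add0n in hS.
  apply: (grid_minus_cons (S' := layer 0 S)) => //; first by move=> z; rewrite mem_layer.
  by apply: IH; rewrite ?mem_layer //; apply: leq_ltn_trans hS; exact: size_layer.
have {}hS : size S <= nonzero_sides Ls by move: hS; rewrite add1n ltnS.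
case: (leqP a b) => hab.
  by have := @layers_connected L Ls S IH hS (b - a) a x y; rewrite subnKC //; apply.
apply: (crt_sym (@grid_minus_sym _ _)).
by have := @layers_connected L Ls S IH hS (a - b) b y x; rewrite subnKC ?(ltnW hab) //; apply.
Qed.

Lemma grid_has_degree Ls x : in_grid Ls x ->
  has_degree (fun y => in_grid Ls y) (fun y z => grid_adj y z) x (size (grid_nbrs Ls x)).
Proof.
move=> hx; exists (grid_nbrs Ls x); split; first exact: uniq_grid_nbrs.
by split=> // y; rewrite mem_grid_nbrs //; split => /andP.
Qed.

Theorem grid_min_degree Ls :
  min_degree_eq (fun x => in_grid Ls x) (fun x y => grid_adj x y) (nonzero_sides Ls).
Proof.
split=> [|x hx]; last first.
  exists (size (grid_nbrs Ls x)); split; first exact: grid_has_degree.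
  exact: nonzero_sides_le_size_grid_nbrs.
exists (grid_origin Ls); split; first exact: in_grid_origin.
by rewrite -size_grid_nbrs_origin; apply/grid_has_degree/in_grid_origin.
Qed.

Theorem grid_vconnectivity Ls :
  vconnectivity_eq (fun x => in_grid Ls x) (fun x y => grid_adj x y) (nonzero_sides Ls).
Proof.
split=> [|m hm]; last first.
  apply: (vconnected_le_degree (v := grid_origin Ls)) hm; first exact: in_grid_origin.
    by rewrite grid_adj_irr.
  by rewrite -size_grid_nbrs_origin; apply/grid_has_degree/in_grid_origin.
split.
  exists (grid_ball Ls); rewrite uniq_grid_ball size_grid_ball; split=> //; split=> //.
  exact: in_grid_ball.
move=> S hS x y [hx xS] [hy yS]; apply: crt_map (grid_minus_connected hS hx hy xS yS).
by move=> a b /and5P[*].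
Qed.

Import Order.TTheory GRing.Theory Num.Theory.
Local Open Scope ring_scope.

(** * Integer boxes *)

Definition in_box (n : nat) (L x : 'cV[int]_n) : Prop := forall i, 0 <= x i 0 /\ x i 0 <= L i 0.

Definition signed_unit (n : nat) (d : 'cV[int]_n) : Prop :=
  exists i, absz (d i 0)%R = 1%N /\ forall j, j != i -> d j 0 = 0.

Definition box_adj (n : nat) (x y : 'cV[int]_n) : Prop := signed_unit (x - y).

Lemma col_mx_entrywise (P : int -> int -> Prop) m n (a a' : 'cV[int]_m) (b b' : 'cV[int]_n) :
  (forall i, P (col_mx a b i 0) (col_mx a' b' i 0)) <->
  (forall i, P (a i 0) (a' i 0)) /\ (forall i, P (b i 0) (b' i 0)).
Proof.
split=> [h | [ha hb] i]; last by case: (split_ordP i) => j ->; rewrite ?col_mxEu ?col_mxEd.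
by split=> i; [have := h (lshift n i) | have := h (rshift m i)]; rewrite ?col_mxEu ?col_mxEd.
Qed.

Lemma in_box_col_mx m n (L1 a : 'cV[int]_m) (L2 b : 'cV[int]_n) :
  in_box (col_mx L1 L2) (col_mx a b) <-> in_box L1 a /\ in_box L2 b.
Proof. exact: (col_mx_entrywise (fun x l => 0 <= x /\ x <= l)). Qed.

Lemma signed_unitN n (d : 'cV[int]_n) : signed_unit (- d) <-> signed_unit d.
Proof.
split=> -[i [hi hj]]; exists i; rewrite ?mxE ?abszN in hi *; split=> // j /hj; rewrite ?mxE.
  by move/eqP; rewrite oppr_eq0 => /eqP.
by move=> ->; rewrite oppr0.
Qed.

Definition entries (n : nat) (x : 'cV[int]_n) : seq nat := [seq absz (x i 0) | i <- enum 'I_n].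

Definition col_of_seq (n : nat) (t : seq nat) : 'cV[int]_n := \col_i (nth 0%N t i)%:Z.

Lemma size_entries n (x : 'cV[int]_n) : size (entries x) = n.
Proof. by rewrite size_map size_enum_ord. Qed.

Lemma nth_entries n (x : 'cV[int]_n) (i : 'I_n) : nth 0%N (entries x) i = absz (x i 0).
Proof. by rewrite (nth_map i) ?size_enum_ord // nth_ord_enum. Qed.

Lemma nth_entries_out n (x : 'cV[int]_n) i : (n <= i)%N -> nth 0%N (entries x) i = 0%N.
Proof. by move=> hi; rewrite nth_default ?size_entries. Qed.

Lemma box_adjE n (x y : 'cV[int]_n) : box_adj x y <->
  exists i, absz (x i 0 - y i 0)%R = 1%N /\ forall j, j != i -> x j 0 = y j 0.
Proof.
split=> -[i [hi hj]]; exists i; split.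
- by rewrite !mxE in hi.
- by move=> j /hj /eqP; rewrite !mxE subr_eq0 => /eqP.
- by rewrite !mxE.
- by move=> j /hj eq_xy; rewrite !mxE eq_xy subrr.
Qed.

Section BoxGrid.
Variables (n : nat) (L : 'cV[int]_n).
Hypothesis L_ge0 : forall i, 0 <= L i 0.

Lemma box_adj_entries x y : in_box L x -> in_box L y ->
  grid_adj (entries x) (entries y) <-> box_adj x y.
Proof.
move=> hx hy; rewrite grid_adjP ?size_entries // box_adjE; split.
  case=> i [hi hj]; have lt_in : (i < n)%N.
    by rewrite ltnNge; apply/negP => /nth_entries_out hn; rewrite !hn in hi; case: hi.
  pose i' := Ordinal lt_in; exists i'; split.
    move: hi; rewrite !(nth_entries _ i'); have [] := hx i'; have [] := hy i'.
    lia.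
  move=> j ji; have := hj j ji; rewrite !nth_entries.
  have [] := hx j; have [] := hy j; lia.
case=> i [hi hj]; exists i; split.
  by rewrite !nth_entries; have [] := hx i; have [] := hy i; lia.
move=> j ji; have [lt_jn | le_nj] := ltnP j n; last by rewrite !nth_entries_out.
by rewrite !(nth_entries _ (Ordinal lt_jn)) hj.
Qed.

Lemma in_box_entries x : in_box L x -> in_grid (entries L) (entries x).
Proof.
move=> hx; apply/in_gridP; rewrite !size_entries; split=> // j.
have [lt_jn | le_nj] := ltnP j n; last by rewrite !nth_entries_out.
by rewrite !(nth_entries _ (Ordinal lt_jn)); have [] := hx (Ordinal lt_jn); lia.
Qed.

Lemma box_grid_iso : graph_iso (in_box L) (@box_adj n) (fun t => in_grid (entries L) t)
  (fun t t' => grid_adj t t') (@entries n) (col_of_seq n).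
Proof.
split.
- exact: in_box_entries.
- move=> t /in_gridP[_ ht] i; rewrite mxE; have := ht i; rewrite nth_entries.
  by have := L_ge0 i; lia.
- by move=> x hx; apply/matrixP => i j; rewrite ord1 !mxE nth_entries; have [] := hx i; lia.
- move=> t /in_gridP[st _]; rewrite size_entries in st.
  apply: (@eq_from_nth _ 0%N); rewrite size_entries ?st // => j lt_jn.
  by rewrite (nth_entries _ (Ordinal lt_jn)) mxE.
- by move=> x y hx hy; apply: box_adj_entries.
Qed.
End BoxGrid.

Lemma nonzero_sides_entries n (x : 'cV[int]_n) :
  nonzero_sides (entries x) = #|[set i | x i 0 != 0]|.
Proof.
rewrite /nonzero_sides count_map -sum1dep_card -sum1_count big_enum_cond /=.
by apply: eq_bigl => i; rewrite /= absz_gt0.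
Qed.

Lemma card_nonzero_col_mx m n (a : 'cV[int]_m) (b : 'cV[int]_n) :
  #|[set i | col_mx a b i 0 != 0]| = addn #|[set i | a i 0 != 0]| #|[set i | b i 0 != 0]|.
Proof.
rewrite -!sum1dep_card big_split_ord /=.
by congr (_ + _); apply: eq_bigl => i; rewrite ?col_mxEu ?col_mxEd.
Qed.

(** * Conformal minimality *)

Lemma cV_neq0 n (d : 'cV[int]_n) : d <> 0 -> exists i, d i 0 != 0.
Proof.
move=> dnz; have [/existsP // | /existsPn d0] := boolP [exists i, d i 0 != 0].
case: dnz.
by apply/matrixP => i j; rewrite ord1 mxE; apply/eqP/negbNE/d0.
Qed.

Lemma conf_minimal_signed_unit n (d : 'cV[int]_n) :
  (d <> 0 /\ forall h : 'cV[int]_n, h <> 0 -> conf_le h d -> h = d) <-> signed_unit d.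
Proof.
split=> [[/cV_neq0[i di0] hmin] | [i [hi hj]]].
  pose h : 'cV[int]_n := \col_j (if j == i then (if 0 < d i 0 then 1 else -1) else 0).
  have hi : h i 0 != 0 by rewrite mxE eqxx; case: ifP.
  have <- : h = d.
    apply: hmin; first by move=> h0; move: hi; rewrite h0 mxE eqxx.
    move=> j; rewrite mxE; case: eqP => [-> | _]; last by rewrite mul0r normr0.
    by case: ifP; lia.
  exists i; split; first by rewrite mxE eqxx; case: ifP.
  by move=> j /negbTE ji; rewrite mxE ji.
split=> [d0 | h hnz hle].
  by move: hi; rewrite d0 mxE.
have hj0 j : j != i -> h j 0 = 0.
  by move=> /hj dj; have := hle j; rewrite dj normr0 normr_le0 => -[_ /eqP].
have hi0 : h i 0 != 0.
  have [i' hi'] := cV_neq0 hnz; suff <- : i' = i by [].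
  by apply/eqP; apply: contraNT hi' => /hj0 ->.
have hii : h i 0 = d i 0 by have := hle i; move: hi0 hi; lia.
apply/matrixP => j k; rewrite ord1; have [-> // | ji] := eqVneq j i.
by rewrite hj0 // hj.
Qed.

Lemma conf_le_col_mx m n (a a' : 'cV[int]_m) (b b' : 'cV[int]_n) :
  conf_le (col_mx a b) (col_mx a' b') <-> conf_le a a' /\ conf_le b b'.
Proof. exact: (col_mx_entrywise (fun x y => 0 <= x * y /\ `|x| <= `|y|)). Qed.

Lemma conf_leN n (a b : 'cV[int]_n) : conf_le (- a) (- b) <-> conf_le a b.
Proof. by split=> h i; have := h i; rewrite ?mxE mulrNN !normrN. Qed.

Lemma conf_le_const (p p' : int) : conf_le (const_mx p : 'cV_1) (const_mx p') <->
  0 <= p * p' /\ `|p| <= `|p'|.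
Proof. by split=> [/(_ 0) | h i]; rewrite !mxE. Qed.

(** * The slices of the fibre *)

Section Fiber.
Variable k : nat.
Local Notation N := (k + k + k + k + 1 + 1)%N.

Definition fiber_vec (X Y Z T : 'cV[int]_k) (p q : int) : 'cV[int]_N :=
  col_mx (col_mx (col_mx (col_mx (col_mx X Y) Z) T) (const_mx p)) (const_mx q).

Lemma fiber_vecP (u : 'cV[int]_N) : exists X Y Z T p q, u = fiber_vec X Y Z T p q.
Proof.
have const_cV1 (a : 'cV[int]_1) : a = const_mx (a 0 0) by apply/matrixP => i j; rewrite !ord1 mxE.
exists (usubmx (usubmx (usubmx (usubmx (usubmx u))))),
  (dsubmx (usubmx (usubmx (usubmx (usubmx u))))),
  (dsubmx (usubmx (usubmx (usubmx u)))), (dsubmx (usubmx (usubmx u))),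
  (dsubmx (usubmx u) 0 0), (dsubmx u 0 0).
by rewrite /fiber_vec -!const_cV1 !vsubmxK.
Qed.

Lemma mul_A_fiber_vec X Y Z T p q : A_mat k *m fiber_vec X Y Z T p q =
  col_mx (col_mx (X + Y - const_mx p) (Z + T - const_mx q)) (const_mx (p + q)).
Proof.
have const_mul m n (a b : int) :
    (const_mx a : 'M_(m, 1)) *m (const_mx b : 'M_(1, n)) = const_mx (a * b).
  by apply/matrixP => i j; rewrite !mxE big_ord1 !mxE.
rewrite /A_mat /fiber_vec !mul_col_mx !mul_row_col !mul0mx !mul1mx !mulNmx !const_mul.
by rewrite !mul1r !addr0 !add0r -const_mx_is_nmod_morphism.
Qed.

Lemma fiber_vec_entrywise (P : int -> int -> Prop) X Y Z T p q X' Y' Z' T' p' q' :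
  (forall i, P (fiber_vec X Y Z T p q i 0) (fiber_vec X' Y' Z' T' p' q' i 0)) <->
  [/\ forall i, P (X i 0) (X' i 0), forall i, P (Y i 0) (Y' i 0),
      forall i, P (Z i 0) (Z' i 0), forall i, P (T i 0) (T' i 0) & P p p' /\ P q q'].
Proof.
rewrite /fiber_vec; split=> [h | [hX hY hZ hT [hp hq]]].
  case/col_mx_entrywise: h => /col_mx_entrywise[/col_mx_entrywise[/col_mx_entrywise[
    /col_mx_entrywise[hX hY] hZ] hT] hp] hq.
  by split=> //; split; [have := hp 0 | have := hq 0]; rewrite !mxE.
apply/col_mx_entrywise; split; last by move=> i; rewrite !mxE.
apply/col_mx_entrywise; split; last by move=> i; rewrite !mxE.
by do 3!(apply/col_mx_entrywise; split=> //).
Qed.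

Lemma fiber_vec_nonneg X Y Z T p q : (forall i, 0 <= fiber_vec X Y Z T p q i 0) <->
  [/\ forall i, 0 <= X i 0, forall i, 0 <= Y i 0, forall i, 0 <= Z i 0,
      forall i, 0 <= T i 0 & 0 <= p /\ 0 <= q].
Proof. exact: (@fiber_vec_entrywise (fun x _ => 0 <= x) X Y Z T p q X Y Z T p q). Qed.

Lemma coord_p_fiber_vec X Y Z T p q : coord_p (fiber_vec X Y Z T p q) = p.
Proof. by rewrite /coord_p /fiber_vec col_mxKu col_mxKd mxE. Qed.

Definition box_coords (u : 'cV[int]_N) : 'cV[int]_(k + k) :=
  col_mx (usubmx (usubmx (usubmx (usubmx (usubmx u))))) (dsubmx (usubmx (usubmx (usubmx u)))).

Lemma box_coords_fiber_vec X Y Z T p q : box_coords (fiber_vec X Y Z T p q) = col_mx X Z.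
Proof. by rewrite /box_coords /fiber_vec !col_mxKu col_mxKd. Qed.

Definition ker_lift (d : 'cV[int]_(k + k)) : 'cV[int]_N :=
  fiber_vec (usubmx d) (- usubmx d) (dsubmx d) (- dsubmx d) 0 0.

Lemma box_coords_ker_lift d : box_coords (ker_lift d) = d.
Proof. by rewrite box_coords_fiber_vec vsubmxK. Qed.

Lemma ker_lift0 : ker_lift 0 = 0.
Proof. by rewrite /ker_lift /fiber_vec !raddf0 ?oppr0 !col_mx0. Qed.

Lemma mul_A_ker_lift d : A_mat k *m ker_lift d = 0.
Proof. by rewrite mul_A_fiber_vec !subrr raddf0 !col_mx0. Qed.

Lemma ker_conf_le_ker_lift h d : A_mat k *m h = 0 -> conf_le h (ker_lift d) ->
  h = ker_lift (box_coords h).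
Proof.
have [X [Y [Z [T [p [q ->]]]]]] := fiber_vecP h.
rewrite box_coords_fiber_vec /ker_lift col_mxKu col_mxKd mul_A_fiber_vec => /eqP.
rewrite !col_mx_eq0 => /andP[/andP[/eqP eXY /eqP eZT] _].
case/conf_le_col_mx => /conf_le_col_mx[_ /conf_le_const[_]] + /conf_le_const[_].
rewrite !normr0 !normr_le0 => /eqP p0 /eqP q0; subst p q.
have c0 : const_mx 0 = 0 :> 'cV[int]_k by apply/matrixP => i j; rewrite !mxE.
rewrite c0 subr0 in eXY; rewrite c0 subr0 in eZT.
by congr fiber_vec; [rewrite -(addKr X Y) eXY | rewrite -(addKr Z T) eZT]; rewrite addr0.
Qed.

Lemma conf_le_ker_lift e d : conf_le (ker_lift e) (ker_lift d) <-> conf_le e d.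
Proof.
rewrite /ker_lift /fiber_vec; split.
  case/conf_le_col_mx => /conf_le_col_mx[/conf_le_col_mx[/conf_le_col_mx[
    /conf_le_col_mx[hX _] hZ] _] _] _.
  by rewrite -(vsubmxK e) -(vsubmxK d); apply/conf_le_col_mx.
rewrite -{1}(vsubmxK e) -{1}(vsubmxK d) => /conf_le_col_mx[hX hZ].
have h0 : conf_le (const_mx 0 : 'cV[int]_1) (const_mx 0) by apply/conf_le_const; rewrite mulr0.
apply/conf_le_col_mx; split=> //; apply/conf_le_col_mx; split=> //.
apply/conf_le_col_mx; split; last exact/conf_leN.
by apply/conf_le_col_mx; split=> //; apply/conf_le_col_mx; split=> //; apply/conf_leN.
Qed.

Lemma ker_lift_eq0 d : (ker_lift d = 0) <-> d = 0.
Proof.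
split=> [d0 | ->]; last exact: ker_lift0.
by rewrite -(box_coords_ker_lift d) d0 -ker_lift0 box_coords_ker_lift.
Qed.

Lemma in_graver_ker_lift d : in_graver (A_mat k) (ker_lift d) <-> signed_unit d.
Proof.
have lift_inj : injective ker_lift := can_inj box_coords_ker_lift.
rewrite -conf_minimal_signed_unit /in_graver; split.
  case=> _ [liftnz hmin]; split=> [/ker_lift_eq0 // | e enz hle].
  apply: lift_inj; apply: hmin; first exact: mul_A_ker_lift.
    by move/ker_lift_eq0.
  exact/conf_le_ker_lift.
case=> dnz hmin; split; first exact: mul_A_ker_lift.
split=> [/ker_lift_eq0 // | h hker hnz hle].
have eh := ker_conf_le_ker_lift hker hle; move: hnz hle; rewrite eh => hnz hle.
congr ker_lift; apply: hmin; last exact/conf_le_ker_lift.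
by move=> e0; apply: hnz; rewrite e0 ker_lift0.
Qed.

Section Slice.
Variables (w1 w2 : 'cV[int]_k) (c s : int).
Hypotheses (s_ge0 : 0 <= s) (cs_ge0 : 0 <= c - s).
Local Notation W1 := (w1 + const_mx s).
Local Notation W2 := (w2 + const_mx (c - s)).

Lemma C_s_fiber_vec X Y Z T p q : C_s w1 w2 c s (fiber_vec X Y Z T p q) <->
  [/\ p = s, q = c - s, in_box W1 X, in_box W2 Z & Y = W1 - X /\ T = W2 - Z].
Proof.
rewrite /C_s /in_fiber coord_p_fiber_vec mul_A_fiber_vec /b_vec; split.
  case=> -[/fiber_vec_nonneg[hX hY hZ hT [hp hq]] eA] <-.
  case/eq_col_mx: eA => /eq_col_mx[/matrixP eX /matrixP eZ] /matrixP /(_ 0 0).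
  rewrite !mxE => epq; split=> //; first lia.
  - by move=> i; have := eX i 0; have := hX i; have := hY i; rewrite !mxE /=; lia.
  - by move=> i; have := eZ i 0; have := hZ i; have := hT i; rewrite !mxE /=; lia.
  by split; apply/matrixP => i j; rewrite ord1; [have := eX i 0 | have := eZ i 0];
    rewrite !mxE /=; lia.
case=> -> -> hX hZ [-> ->]; split=> //; split.
  apply/fiber_vec_nonneg; split=> [i|i|i|i|];
    [move: (hX i) | move: (hX i) | move: (hZ i) | move: (hZ i) | idtac]; rewrite ?mxE /=; lia.
by congr col_mx; [congr col_mx|]; apply/matrixP => i j; rewrite ?ord1 !mxE /=; lia.
Qed.

Definition slice_bound : 'cV[int]_(k + k) := col_mx W1 W2.

Definition fiber_point (d : 'cV[int]_(k + k)) : 'cV[int]_N :=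
  fiber_vec (usubmx d) (W1 - usubmx d) (dsubmx d) (W2 - dsubmx d) s (c - s).

Lemma box_coords_fiber_point d : box_coords (fiber_point d) = d.
Proof. by rewrite box_coords_fiber_vec vsubmxK. Qed.

Lemma C_s_fiber_point u :
  C_s w1 w2 c s u <-> exists2 d, in_box slice_bound d & u = fiber_point d.
Proof.
split=> [|[d hd ->]].
  have [X [Y [Z [T [p [q ->]]]]]] := fiber_vecP u.
  case/C_s_fiber_vec => -> -> hX hZ [-> ->]; exists (col_mx X Z).
    exact/in_box_col_mx.
  by rewrite /fiber_point col_mxKu col_mxKd.
move: hd; rewrite /slice_bound -{1}(vsubmxK d) => /in_box_col_mx[hX hZ].
exact/C_s_fiber_vec.
Qed.

Lemma fiber_point_sub d d' : fiber_point d - fiber_point d' = ker_lift (d - d').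
Proof.
rewrite /fiber_point /ker_lift /fiber_vec !opp_col_mx !add_col_mx.
by congr (col_mx (col_mx (col_mx (col_mx (col_mx _ _) _) _) _) _);
  apply/matrixP => i j; rewrite ?ord1 !mxE /=; lia.
Qed.

Lemma fiber_adj_fiber_point d d' :
  fiber_adj (in_graver (A_mat k)) (fiber_point d) (fiber_point d') <-> box_adj d d'.
Proof.
rewrite /fiber_adj /box_adj opprB !fiber_point_sub.
have symm := signed_unitN (d - d'); rewrite opprB in symm.
split=> [[_ [h | h]] | hu].
- exact/in_graver_ker_lift.
- by apply/symm/in_graver_ker_lift.
split; last by left; apply/in_graver_ker_lift.
move=> /(congr1 box_coords); rewrite !box_coords_fiber_point => /eqP; rewrite -subr_eq0 => /eqP.
by have [] := (conf_minimal_signed_unit (d - d')).2 hu.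
Qed.

Lemma fiber_box_iso : graph_iso (C_s w1 w2 c s) (fiber_adj (in_graver (A_mat k)))
  (in_box slice_bound) (@box_adj _) box_coords fiber_point.
Proof.
split.
- by move=> u /C_s_fiber_point[d hd ->]; rewrite box_coords_fiber_point.
- by move=> d hd; apply/C_s_fiber_point; exists d.
- by move=> u /C_s_fiber_point[d _ ->]; rewrite box_coords_fiber_point.
- by move=> d _; exact: box_coords_fiber_point.
move=> u v /C_s_fiber_point[d _ ->] /C_s_fiber_point[d' _ ->].
by rewrite !box_coords_fiber_point fiber_adj_fiber_point.
Qed.

End Slice.

End Fiber.

Lemma neg_inf_norm_le k (w : 'cV[int]_k) t :
  neg_inf_norm w <= t -> 0 <= t /\ forall i, 0 <= w i 0 + t.
Proof.
by case/bigmax_leP => t_ge0 ht; split=> // i; have := ht i isT; rewrite ge_max => /andP[]; lia.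
Qed.

Theorem lemma6 (k : nat) (hk : (1 <= k)%N) (w1 w2 : 'cV[int]_k) (c : int)
  (hne : exists u, in_fiber (A_mat k) (b_vec w1 w2 c) u)
  (s : int) (hs : l_b w1 <= s <= u_b w2 c) :
  min_degree_eq (C_s w1 w2 c s) (fiber_adj (in_graver (A_mat k)))
    (supp_size w1 s + supp_size w2 (c - s))%N /\
  vconnectivity_eq (C_s w1 w2 c s) (fiber_adj (in_graver (A_mat k)))
    (supp_size w1 s + supp_size w2 (c - s))%N.
Proof.
case/andP: hs => /neg_inf_norm_le[s_ge0 hw1] hu.
have /neg_inf_norm_le[cs_ge0 hw2] : neg_inf_norm w2 <= c - s by rewrite /u_b in hu; lia.
have L_ge0 i : 0 <= slice_bound w1 w2 c s i 0.
  by case: (split_ordP i) => j ->; rewrite ?col_mxEu ?col_mxEd !mxE; [exact: hw1 | exact: hw2].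
have sides : nonzero_sides (entries (slice_bound w1 w2 c s)) =
    (supp_size w1 s + supp_size w2 (c - s))%N.
  rewrite nonzero_sides_entries card_nonzero_col_mx.
  by congr addn; apply: eq_card => i; rewrite !inE !mxE.
have fiso := fiber_box_iso w1 w2 s_ge0 cs_ge0; have biso := box_grid_iso L_ge0.
rewrite -sides; split.
  apply: (iso_min_degree_eq fiso); apply: (iso_min_degree_eq biso).
  exact: grid_min_degree.
apply: (iso_vconnectivity_eq fiso); apply: (iso_vconnectivity_eq biso).
exact: grid_vconnectivity.
Qed.
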